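(* Let $(I,=_I,\neq_I;K)$ be a completely separated set and $\boldsymbol S=(\lambda_0,\lambda_1;\phi_0,\phi_1)$ a family of completely separated sets over it, with $\phi_0(i)=F_i$. Let $\bigotimes_{i\in I}F_i:=\{f_i\circ\mathrm{pr}_i\mid i\in I,\ f_i\in F_i\}$, where $\mathrm{pr}_i(\Theta):=\Theta_i$. Then $$\Big(\prod_{i\in I}\lambda_0(i),\ =_{\prod},\ \neq_{\prod};\ \bigotimes_{i\in I}F_i\Big)$$ is a completely separated set; in particular $\Theta\neq_{\prod}\Theta'\Leftrightarrow\Theta\neq_{(\prod_{i\in I}\lambda_0(i),\bigotimes_{i\in I}F_i)}\Theta'$.
   Context: Setting: constructive (Bishop-style) mathematics with intuitionistic logic. Sets carry an equality; functions respect equalities; $\mathbb F(X)$ = functions $X\to\mathbb R$ with pointwise equality; an extensional subset of $\mathbb F(X)$ is $\{f\mid P(f)\}$ with $P$ respecting $=_{\mathbb F(X)}$. $a\neq_{\mathbb R}b:\Leftrightarrow|a-b|>0$. An inequality $\neq_X$ satisfies $x=_Xy\ \&\ x\neq_Xy\Rightarrow\bot$. Strongly extensional: $f(x)\neq f(y)\Rightarrow x\neq y$. Induced relations: $x=_{(X,F)}x':\Leftrightarrow\forall_{f\in F}f(x)=f(x')$, $x\neq_{(X,F)}x':\Leftrightarrow\exists_{f\in F}f(x)\neq_{\mathbb R}f(x')$. A completely separated set $(X,=_X,\neq_X;F)$: $F$ extensional subset of $\mathbb F(X)$, $\neq_X\Leftrightarrow\neq_{(X,F)}$ and $x=_{(X,F)}x'\Rightarrow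 x=_Xx'$. Family of sets with an inequality over $(I,=_I,\neq_I)$: $i\mapsto(\lambda_0(i),=_{\lambda_0(i)},\neq_{\lambda_0(i)})$ and strongly extensional $\lambda_{ij}:\lambda_0(i)\to\lambda_0(j)$ for $i=_Ij$, with $\lambda_{ii}=\mathrm{id}$ and $\lambda_{jk}\circ\lambda_{ij}=\lambda_{ik}$ whenever $i=_Ij=_Ik$. Family of completely separated sets over completely separated $(I,=_I,\neq_I;K)$: additionally extensional $F_i\subseteq\mathbb F(\lambda_0(i))$ and functions $\phi_{ij}:F_i\to F_j$ ($i=_Ij$) with (a) $\neq_{\lambda_0(i)}\Leftrightarrow\neq_{(\lambda_0(i),F_i)}$, (b) $x=_{(\lambda_0(i),F_i)}x'\Rightarrow x=_{\lambda_0(i)}x'$, (c) $\phi_{ij}(f)=f\circ\lambda_{ji}$ for $f\in F_i$, $i=_Ij$. Pi-set $\prod_{i\in I}\lambda_0(i)$: dependent assignments $\Theta$ with $\Theta_i\in\lambda_0(i)$ for every $i$ and $\Theta_j=_{\lambda_0(j)}\lambda_{ij}(\Theta_i)$ whenever $i=_Ij$; $\Theta=_{\prod}\Theta':\Leftrightarrow\forall_i\Theta_i=_{\lambda_0(i)}\Theta'_i$; $\Theta\neq_{\prod}\Theta':\Leftrightarrow\exists_i\Theta_i\neq_{\lambda_0(i)}\Theta'_i$. *)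

(* real numbers are Stdlib's R. Bishop-style sets are modelled
   as (carrier type, equality relation, inequality relation). *)
From Stdlib Require Import Reals.
Open Scope R_scope.


Definition Rneq (a b : R) : Prop := 0 < Rabs (a - b).

Definition is_equivalence {X : Type} (eqX : X -> X -> Prop) : Prop :=
  (forall x, eqX x x) /\ (forall x y, eqX x y -> eqX y x) /\
  (forall x y z, eqX x y -> eqX y z -> eqX x z).

Definition is_inequality {X : Type} (eqX neqX : X -> X -> Prop) : Prop :=
  forall x y, eqX x y -> neqX x y -> False.

Definition is_real_function {X : Type} (eqX : X -> X -> Prop) (f : X -> R) : Prop :=
  forall x y, eqX x y -> f x = f y.

Definition extensional_subset {X : Type} (eqX : X -> X -> Prop)
  (F : (X -> R) -> Prop) : Prop :=
  (forall f, F f -> is_real_function eqX f) /\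
  (forall f g, F f -> (forall x, f x = g x) -> F g).

Definition induced_eq {X : Type} (F : (X -> R) -> Prop) (x y : X) : Prop :=
  forall f, F f -> f x = f y.
Definition induced_neq {X : Type} (F : (X -> R) -> Prop) (x y : X) : Prop :=
  exists f, F f /\ Rneq (f x) (f y).

Definition completely_separated {X : Type} (eqX neqX : X -> X -> Prop)
  (F : (X -> R) -> Prop) : Prop :=
  is_equivalence eqX /\ is_inequality eqX neqX /\ extensional_subset eqX F /\
  (forall x y, neqX x y <-> induced_neq F x y) /\
  (forall x y, induced_eq F x y -> eqX x y).

(* Family of sets with an inequality over (I, =_I): lam1 i j H is lambda_{ij},
   for H a witness of i =_I j. *)
Definition family_with_inequality {I : Type} (eqI : I -> I -> Prop)
  (lam0 : I -> Type)
  (eqL neqL : forall i, lam0 i -> lam0 i -> Prop)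
  (lam1 : forall i j, eqI i j -> lam0 i -> lam0 j) : Prop :=
  (forall i, is_equivalence (eqL i) /\ is_inequality (eqL i) (neqL i)) /\
  (forall i j (H : eqI i j) x y, eqL i x y -> eqL j (lam1 i j H x) (lam1 i j H y)) /\
  (forall i j (H : eqI i j) x y,
      neqL j (lam1 i j H x) (lam1 i j H y) -> neqL i x y) /\
  (forall i (H : eqI i i) x, eqL i (lam1 i i H x) x) /\
  (forall i j k (Hij : eqI i j) (Hjk : eqI j k) (Hik : eqI i k) x,
      eqL k (lam1 j k Hjk (lam1 i j Hij x)) (lam1 i k Hik x)).

(* Family of completely separated sets over (I, =_I, <>_I; K), with
   phi_0(i) = F i; the functions phi_ij : F_i -> F_j, phi_ij(f) = f o lambda_ji,
   exist exactly when F_j is closed under precomposition with lambda_ji. *)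
Definition cs_family {I : Type} (eqI neqI : I -> I -> Prop) (K : (I -> R) -> Prop)
  (lam0 : I -> Type)
  (eqL neqL : forall i, lam0 i -> lam0 i -> Prop)
  (lam1 : forall i j, eqI i j -> lam0 i -> lam0 j)
  (F : forall i, (lam0 i -> R) -> Prop) : Prop :=
  family_with_inequality eqI lam0 eqL neqL lam1 /\
  (forall i, extensional_subset (eqL i) (F i)) /\
  (forall i x y, neqL i x y <-> induced_neq (F i) x y) /\
  (forall i x y, induced_eq (F i) x y -> eqL i x y) /\
  (forall i j (Hji : eqI j i) f, F i f -> F j (fun y => f (lam1 j i Hji y))).

Definition PiSet {I : Type} (eqI : I -> I -> Prop) (lam0 : I -> Type)
  (eqL : forall i, lam0 i -> lam0 i -> Prop)
  (lam1 : forall i j, eqI i j -> lam0 i -> lam0 j) : Type :=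
  { T : forall i, lam0 i |
    forall i j (H : eqI i j), eqL j (T j) (lam1 i j H (T i)) }.

Section Pi.
Context {I : Type} {eqI : I -> I -> Prop} {lam0 : I -> Type}
  {eqL : forall i, lam0 i -> lam0 i -> Prop}
  {lam1 : forall i j, eqI i j -> lam0 i -> lam0 j}.

Definition pr (i : I) (T : PiSet eqI lam0 eqL lam1) : lam0 i := proj1_sig T i.

Definition eqPi (T T' : PiSet eqI lam0 eqL lam1) : Prop :=
  forall i, eqL i (pr i T) (pr i T').

Definition neqPi (neqL : forall i, lam0 i -> lam0 i -> Prop)
  (T T' : PiSet eqI lam0 eqL lam1) : Prop :=
  exists i, neqL i (pr i T) (pr i T').

Definition tensorF (F : forall i, (lam0 i -> R) -> Prop)
  (g : PiSet eqI lam0 eqL lam1 -> R) : Prop :=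
  exists i f, F i f /\ forall T, g T = f (pr i T).
End Pi.

From Stdlib Require Import Reals.

(* Every clause of "completely separated" for the Pi-set reduces to the same
   clause in each fibre, because equality and inequality of the Pi-set are
   defined coordinatewise and the functions in \bigotimes_i F_i only see one
   coordinate at a time.  The theorem assembles them; the structure of the
   index set and the transport maps lambda_ij are not needed. *)

Section PiFibrewise.

Variables (I : Type) (eqI : I -> I -> Prop) (lam0 : I -> Type)
  (eqL neqL : forall i, lam0 i -> lam0 i -> Prop)
  (lam1 : forall i j, eqI i j -> lam0 i -> lam0 j)
  (F : forall i, (lam0 i -> R) -> Prop).

Local Notation Pi := (PiSet eqI lam0 eqL lam1).
Local Notation pr := (@pr I eqI lam0 eqL lam1).
Local Notation eqPi := (@eqPi I eqI lam0 eqL lam1).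
Local Notation neqPi := (@neqPi I eqI lam0 eqL lam1 neqL).
Local Notation tensorF := (@tensorF I eqI lam0 eqL lam1 F).

Lemma tensorF_generator (i : I) (f : lam0 i -> R) :
  F i f -> tensorF (fun T => f (pr i T)).
Proof. intros Hf. exists i, f. split; [exact Hf | reflexivity]. Qed.

Lemma induced_neq_tensorF (T T' : Pi) :
  induced_neq tensorF T T' <-> exists i, induced_neq (F i) (pr i T) (pr i T').
Proof.
  split.
  - intros [g [[i [f [Hf Hg]]] Hapart]].
    exists i, f. split; [exact Hf|]. now rewrite !Hg in Hapart.
  - intros [i [f [Hf Hapart]]].
    exists (fun T => f (pr i T)). split; [apply tensorF_generator, Hf | exact Hapart].
Qed.

Lemma induced_eq_tensorF (T T' : Pi) :
  induced_eq tensorF T T' <-> forall i, induced_eq (F i) (pr i T) (pr i T').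
Proof.
  split.
  - intros Heq i f Hf. exact (Heq _ (tensorF_generator i f Hf)).
  - intros Heq g [i [f [Hf Hg]]]. rewrite !Hg. exact (Heq i f Hf).
Qed.

Lemma eqPi_equivalence :
  (forall i, is_equivalence (eqL i)) -> is_equivalence eqPi.
Proof.
  intros Heq. split; [|split].
  - intros T i. destruct (Heq i) as [Hrefl _]. apply Hrefl.
  - intros T T' H i. destruct (Heq i) as [_ [Hsym _]]. apply Hsym, H.
  - intros T T' T'' H H' i. destruct (Heq i) as [_ [_ Htrans]].
    exact (Htrans _ _ _ (H i) (H' i)).
Qed.

Lemma neqPi_inequality :
  (forall i, is_inequality (eqL i) (neqL i)) -> is_inequality eqPi neqPi.
Proof. intros Hineq T T' Heq [i Hi]. exact (Hineq i _ _ (Heq i) Hi). Qed.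

Lemma tensorF_extensional :
  (forall i, extensional_subset (eqL i) (F i)) -> extensional_subset eqPi tensorF.
Proof.
  intros Hext. split.
  - intros g [i [f [Hf Hg]]] T T' HTT'. rewrite !Hg.
    exact (proj1 (Hext i) f Hf _ _ (HTT' i)).
  - intros g h [i [f [Hf Hg]]] Hgh. exists i, f. split; [exact Hf|].
    intros T. rewrite <- Hgh. apply Hg.
Qed.

Lemma neqPi_induced :
  (forall i x y, neqL i x y <-> induced_neq (F i) x y) ->
  forall T T', neqPi T T' <-> induced_neq tensorF T T'.
Proof.
  intros Hneq T T'. rewrite induced_neq_tensorF.
  split; intros [i Hi]; exists i; apply Hneq, Hi.
Qed.

Lemma tensorF_separates :
  (forall i x y, induced_eq (F i) x y -> eqL i x y) ->
  forall T T', induced_eq tensorF T T' -> eqPi T T'.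
Proof.
  intros Hsep T T' HTT' i. apply Hsep. exact (proj1 (induced_eq_tensorF T T') HTT' i).
Qed.

End PiFibrewise.

Theorem proposition4p5 (I : Type) (eqI neqI : I -> I -> Prop) (K : (I -> R) -> Prop)
  (lam0 : I -> Type) (eqL neqL : forall i, lam0 i -> lam0 i -> Prop)
  (lam1 : forall i j, eqI i j -> lam0 i -> lam0 j)
  (F : forall i, (lam0 i -> R) -> Prop) :
  completely_separated eqI neqI K ->
  cs_family eqI neqI K lam0 eqL neqL lam1 F ->
  completely_separated (@eqPi I eqI lam0 eqL lam1)
                       (@neqPi I eqI lam0 eqL lam1 neqL)
                       (@tensorF I eqI lam0 eqL lam1 F).
Proof.
  intros _ [[Hfib _] [Hext [Hneq [Hsep _]]]].
  split; [|split; [|split; [|split]]].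
  - apply eqPi_equivalence. intros i. apply (Hfib i).
  - apply neqPi_inequality. intros i. apply (Hfib i).
  - apply tensorF_extensional, Hext.
  - apply neqPi_induced, Hneq.
  - apply tensorF_separates, Hsep.
Qed.
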